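(* Let $\Gamma$ be a $3$-saturated drawing. Then \[ \sum_{a\ge 6} a\,|\mathcal{C}_a| \;\ge\; \tau(B_4,L)+\tau(B_5,L)+\tau(A_3,L)+\tau(A_5,L)+5\,N(U_6). \]
   Context: Drawings are on the sphere: vertices are distinct points, edges (of a graph possibly with parallel edges, no loops) are Jordan arcs; any two edges share finitely many points, each a common endpoint or a proper crossing; no three edges cross at one point; no edge crosses itself; adjacent edges do not cross. A drawing is $3$-plane if every edge is crossed at most three times. A lens is a region bounded by exactly two parts of edges; a drawing is non-homotopic if every lens contains a crossing or vertex in its interior. An edge with $i$ crossings is split into $i+1$ edge-segments; an edge-segment is inner if both its endpoints are crossings and outer otherwise. The planarization replaces each crossing by a degree-$4$ vertex; the drawing is connected if its planarization is connected. Cells are the components of the sphere minus all vertices and edges; the boundary $\partial c$ of a cell is a cyclic sequence alternating between edge-segments and vertices/crossings. The size $\|c\|$ of a cell is the number of vertex incidences plus the number of edge-segment incidences along $\partial c$ (crossings not counted); $\mathcal{C}_a$ is the set of cells of size $a$. A drawing is filled if for every cell $c$ and distinct vertices $u\ne v$ on $\partial c$ there is an uncrossed edge $uv$ on $\partial c$. A drawing is $3$-saturated if it is $3$-plane, non-homotopic, connected, filled, and has at least three vertices. Cell types: $A_3$: three crossings and three inner edge-segments, no vertex. $A_4$: four crossings and four inner edge-segments. $B_4$: boundary $v$, outer segment, crossing, inner segment, crossing, outer segment. $B_5$: boundary $v$, outer segment, crossing, inner segment, crossing, inner segment, crossing, outer segment. $A_5$: five crossings and five inner segments. $U_6$: boundary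 $u$, uncrossed edge $uv$, $v$, outer segment, crossing, inner segment, crossing, outer segment (two vertices $u,v$), size $6$. $L$: any cell of size at least $6$. $N(T)$ is the number of cells of type $T$. Trails: a trail is a sequence $(c_1,\dots,c_\ell)$, $\ell\ge 2$, of cells such that (1) neither $c_1$ nor $c_\ell$ is of type $A_4$; (2) consecutive cells $c_i,c_{i+1}$ share an inner edge-segment; (3) each of $c_2,\dots,c_{\ell-1}$ is an $A_4$-cell whose two edge-segments shared with its neighbours are opposite on its boundary. A trail and its reversal are the same trail. $\tau(T,T')=\tau(T',T)$ is the number of trails whose end cells are of types $T$ and $T'$. *)

(* A drawing on the sphere is encoded, up to homeomorphism of
   the sphere, by its planarization viewed as a combinatorial map (rotation
   system) on a finite set of darts. *)
From mathcomp Require Import all_boot.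

Set Implicit Arguments.
Unset Strict Implicit.
Unset Printing Implicit Defensive.

(* dart    : half-edge-segments of the planarization (each edge-segment of the
             drawing gives two darts, one at each end);
   alpha   : the other dart of the same edge-segment;
   sigma   : the (counterclockwise) rotation of darts around their node;
   isv d   : the node (vertex of the planarization) at which d starts is a
             vertex of the drawing (otherwise it is a crossing).  *)
Record drawing := Drawing {
  dart  : finType;
  alpha : dart -> dart;
  sigma : dart -> dart;
  isv   : pred dart }.

Section Drawing.
Variable G : drawing.
Local Notation D := (dart G).
Local Notation al := (@alpha G).
Local Notation sg := (@sigma G).
Local Notation v := (@isv G).

(* face permutation: the boundary walk of a cell traverses the segment of d,
   arrives at the node of (al d) and continues with phi d. *)
Definition phi (d : D) : D := sg (al d).
(* continuation of an edge straight through the crossing at the far end of d *)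
Definition nx (d : D) : D := sg (sg (al d)).

Definition same_node : rel D := fconnect sg.
Definition same_face : rel D := fconnect phi.
Definition edge_link : rel D :=
  fun d e => (e == al d) || (~~ v d && (e == sg (sg d))).
Definition same_edge : rel D := connect edge_link.
Definition map_link : rel D := fun d e => (e == al d) || (e == sg d).

Definition n_nodes : nat := #|[set froot sg d | d : D]|.
Definition faces : {set D} := [set froot phi d | d : D].
Definition n_faces : nat := #|faces|.

Definition is_drawing : Prop :=
  (forall d, al (al d) = d) /\ (forall d, al d != d) /\ injective sg /\
  (forall d, v (sg d) = v d) /\
  (* connected planarization, embedded in the sphere (Euler formula) *)
  (forall d e, connect map_link d e) /\
  2 * (n_nodes + n_faces) = #|D| + 4 /\
  (* crossings are proper crossings of exactly two edges *)
  (forall d, ~~ v d -> order sg d = 4) /\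
  (* every edge is an arc between two vertices (no closed curves) *)
  (forall d, exists k, v (al (iter k nx d))) /\
  (* no edge crosses itself *)
  (forall d, ~~ v d -> ~~ same_edge d (sg d)) /\
  (* adjacent edges do not cross *)
  (forall d u w, ~~ v d -> v u -> v w -> same_edge d u ->
       same_edge (sg d) w -> ~~ same_node u w) /\
  (* no loops *)
  (forall u w, v u -> v w -> same_edge u w -> u != w -> ~~ same_node u w).

(* every edge is crossed at most three times *)
Definition three_plane : Prop :=
  forall d, v d -> exists2 k, k <= 3 & v (al (iter k nx d)).

(* Lenses.  A part of an edge is a straight path x :: s of darts, going from
   the node of x to the node of (al (last x s)) through crossings. *)
Definition straight_step : rel D := fun x y => ~~ v (al x) && (y == nx x).
Definition spath (x : D) (s : seq D) : bool := path straight_step x s.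
Definition pnodes (x : D) (s : seq D) : seq D := x :: map al (x :: s).
Definition psegs (x : D) (s : seq D) : seq D := (x :: s) ++ map al (x :: s).

(* two edge-parts x::s and y::t with common distinct end nodes and no other
   common node bound a closed Jordan curve *)
Definition lens_curve (x : D) (s : seq D) (y : D) (t : seq D) : bool :=
  [&& spath x s, spath y t, x != y, same_node x y,
      same_node (al (last x s)) (al (last y t)),
      ~~ same_node x (al (last x s)) &
      all (fun u => all (fun w => same_node u w ==>
               (same_node u x || same_node u (al (last x s))))
               (pnodes y t)) (pnodes x s)].

(* moving inside one of the two regions bounded by the curve *)
Definition side_link (cut : seq D) : rel D :=
  fun d e => (e == phi d) || ((e == al d) && (d \notin cut)).

Definition non_homotopic : Prop :=
  forall x s y t, lens_curve x s y t ->
    let cut := psegs x s ++ psegs y t in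
    let cn := pnodes x s ++ pnodes y t in
    forall w, w \in [:: x; al x] ->
      exists e, connect (side_link cut) w e && all (fun u => ~~ same_node e u) cn.

Definition connected_drawing : Prop := forall d e, connect map_link d e.

Definition filled : Prop :=
  forall d1 d2, same_face d1 d2 -> v d1 -> v d2 -> ~~ same_node d1 d2 ->
    exists e, [/\ same_face d1 e, v e, v (al e) &
      (same_node e d1 && same_node (al e) d2) ||
      (same_node e d2 && same_node (al e) d1)].

Definition three_vertices : Prop :=
  exists u w z, [/\ v u, v w, v z &
     [&& ~~ same_node u w, ~~ same_node u z & ~~ same_node w z]].

Definition three_saturated : Prop :=
  is_drawing /\ three_plane /\ non_homotopic /\ connected_drawing /\
  filled /\ three_vertices.

(* Cells: the cell of dart d is its phi-orbit. *)
Definition flen (d : D) : nat := order phi d.            (* edge-segment incidences *)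
Definition fnv (d : D) : nat := count v (orbit phi d).  (* vertex incidences *)
Definition fsize (d : D) : nat := flen d + fnv d.

Definition isA3 (d : D) : bool := (flen d == 3) && (fnv d == 0).
Definition isA4 (d : D) : bool := (flen d == 4) && (fnv d == 0).
Definition isA5 (d : D) : bool := (flen d == 5) && (fnv d == 0).
Definition isB4 (d : D) : bool := (flen d == 3) && (fnv d == 1).
Definition isB5 (d : D) : bool := (flen d == 4) && (fnv d == 1).
Definition isU6 (d : D) : bool :=
  [&& flen d == 4, fnv d == 2 & has (fun e => v e && v (phi e)) (orbit phi d)].
Definition isL (d : D) : bool := 6 <= fsize d.

Definition inner (d : D) : bool := ~~ v d && ~~ v (al d).

(* Trails: leaving the cell of d through the segment of d, entering the cell
   of (al d); in an A4-cell the walk exits through the opposite segment. *)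
Definition tr (d : D) : D := iter 2 phi (al d).

(* the trail starting through the inner segment d ends in a cell satisfying P
   (the bound k < #|D| is harmless) *)
Definition trail_ends (P : pred D) (d : D) : bool :=
  [exists k : 'I_#|D|,
     [forall j : 'I_#|D|, (j < k) ==> isA4 (al (iter j tr d))] &&
     P (al (iter k tr d))].

(* tau(T, L) for a type T different from A4 and disjoint from L *)
Definition tauL (T : pred D) : nat :=
  #|[set d : D | [&& T d, inner d & trail_ends isL d]]|.

Definition N_U6 : nat := #|[set c in faces | isU6 c]|.

Definition large_sum : nat := \sum_(c in faces | 6 <= fsize c) fsize c.

End Drawing.

(* A trail starting in a B4-, B5-, A3- or A5-cell and ending in a large cell
   enters that cell through one of its inner edge-segments.  Distinct trails
   end at distinct segments: the step [tr] across an A4-cell is injective, and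
   a trail cannot be prolonged backwards past its first cell, which is not an
   A4-cell.  A large cell of size a has at most a inner edge-segments, and a
   U6-cell has only one, which leaves room for the extra 5 per U6-cell. *)
From Pilot Require Import Defs.
From mathcomp Require Import all_boot.

Set Implicit Arguments.
Unset Strict Implicit.
Unset Printing Implicit Defensive.

Lemma inj_iter (T : Type) (f : T -> T) (n : nat) :
  injective f -> injective (iter n f).
Proof. by move=> f_inj; elim: n => [//|n IHn] x y /f_inj /IHn. Qed.

Lemma perm_orbit (T : finType) (f : T -> T) (x y : T) :
  injective f -> fconnect f x y -> perm_eq (orbit f x) (orbit f y).
Proof.
move=> f_inj; rewrite fconnect_orbit => y_x.
have [i ->] := orbit_rot_cycle (cycle_orbit f_inj x) (orbit_uniq f x) y_x.
by rewrite perm_sym perm_rot.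
Qed.

Section Planarization.

Variable G : drawing.
Local Notation D := (dart G).
Local Notation al := (@alpha G).
Local Notation v := (@isv G).
Local Notation tr := (@Defs.tr G).
Local Notation isL := (@Defs.isL G).
Local Notation inner := (@Defs.inner G).
Local Notation phi := (@Defs.phi G).

Hypothesis alphaK : involutive al.
Hypothesis sigma_inj : injective (@sigma G).
Hypothesis isv_sigma : forall d : D, v (sigma d) = v d.

Lemma phi_inj : injective phi.
Proof. by move=> d e /sigma_inj /(can_inj alphaK). Qed.

Lemma tr_inj : injective tr.
Proof. by move=> d e /phi_inj /phi_inj /(can_inj alphaK). Qed.

Lemma isv_phi (d : D) : v (phi d) = v (al d).
Proof. exact: isv_sigma. Qed.

Lemma inner_alpha (d : D) : inner (al d) = inner d.
Proof. by rewrite /inner alphaK andbC. Qed.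

Lemma flen_same_face (d e : D) : same_face d e -> flen d = flen e.
Proof. by move=> /(perm_orbit phi_inj) /perm_size; rewrite !size_orbit. Qed.

Lemma fnv_same_face (d e : D) : same_face d e -> fnv d = fnv e.
Proof. by rewrite /fnv => /(perm_orbit phi_inj) /permP. Qed.

Lemma isA4_same_face (d e : D) : same_face d e -> isA4 e = isA4 d.
Proof. by move=> de; rewrite /isA4 (flen_same_face de) (fnv_same_face de). Qed.

Lemma isL_same_face (d e : D) : same_face d e -> isL e = isL d.
Proof.
by move=> de; rewrite /isL /fsize (flen_same_face de) (fnv_same_face de).
Qed.

Lemma isvF_fnv0 (d e : D) : fnv d = 0 -> same_face d e -> ~~ v e.
Proof.
move/eqP; rewrite -leqn0 leqNgt -has_count => /hasPn no_v.
by rewrite /same_face fconnect_orbit; apply: no_v.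
Qed.

Lemma same_face_tr (d : D) : same_face (al d) (tr d).
Proof. exact: fconnect_iter. Qed.

Lemma isA4_tr (d : D) : isA4 (al d) -> isA4 (tr d).
Proof. by rewrite (isA4_same_face (same_face_tr d)). Qed.

Lemma inner_tr (d : D) : isA4 (al d) -> inner (tr d).
Proof.
move=> /andP [_ /eqP no_v]; have trd := same_face_tr d.
rewrite /inner -isv_phi !(isvF_fnv0 no_v) //.
exact: connect_trans trd (fconnect1 _ _).
Qed.

(* Every dart reached by a step [tr] from an A4-cell lies in an A4-cell, so
   [d1] is reached from [d2] in k2 - k1 = 0 steps. *)
Lemma trail_unwind (d1 d2 : D) (k1 k2 : nat) :
  ~~ isA4 d1 -> (forall j, j < k2 -> isA4 (al (iter j tr d2))) ->
  k1 <= k2 -> iter k1 tr d1 = iter k2 tr d2 -> d1 = d2.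
Proof.
move=> d1_A4 A4_before k12; rewrite -(subnKC k12) iterD.
move=> /(inj_iter tr_inj) d1E; move: d1_A4; rewrite {}d1E.
case: (k2 - k1) (leq_subr k1 k2) => [//|m] lt_m.
by rewrite iterS isA4_tr ?A4_before.
Qed.

(* [trail_ends P d] unfolds to [[exists k, trail_at P d k]]. *)
Definition trail_at (P : pred D) (d : D) (k : 'I_#|D|) : bool :=
  [forall j : 'I_#|D|, (j < k) ==> isA4 (al (iter j tr d))] &&
  P (al (iter k tr d)).

Lemma trail_at_A4 (P : pred D) (d : D) (k : 'I_#|D|) j :
  trail_at P d k -> j < k -> isA4 (al (iter j tr d)).
Proof.
move=> /andP [/forallP A4_before _] lt_jk.
by have := A4_before (Ordinal (ltn_trans lt_jk (ltn_ord k))); rewrite /= lt_jk.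
Qed.

Definition trail_end (d : D) : D :=
  if [pick k | trail_at isL d k] is Some k then al (iter k tr d) else d.

Lemma trail_endP (d : D) : trail_ends isL d ->
  exists2 k, trail_at isL d k & trail_end d = al (iter k tr d).
Proof.
rewrite /trail_end; case: pickP => [k at_k _ | none]; first by exists k.
by move=> /existsP [k at_k]; have := none k; rewrite /trail_at at_k.
Qed.

Lemma trail_end_inner_large (d : D) :
  inner d -> trail_ends isL d -> inner (trail_end d) && isL (trail_end d).
Proof.
move=> inner_d /trail_endP [k at_k ->]; rewrite inner_alpha (proj2 (andP at_k)).
rewrite andbT; case: k at_k => [[|k] lt_k] at_k //=.
by rewrite inner_tr // (trail_at_A4 at_k).
Qed.

Lemma trail_end_inj (P : pred D) : (forall d, P d -> ~~ isA4 d) ->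
  {in [set d | [&& P d, inner d & trail_ends isL d]] &, injective trail_end}.
Proof.
move=> P_A4 d1 d2; rewrite !inE => /and3P [P1 _ /trail_endP [k1 at1 ->]].
move=> /and3P [P2 _ /trail_endP [k2 at2 ->]] /(can_inj alphaK) same_end.
have [k12 | /ltnW k21] := leqP k1 k2.
  exact: trail_unwind (P_A4 _ P1) (fun j => trail_at_A4 at2) k12 same_end.
exact/esym/(trail_unwind (P_A4 _ P2) (fun j => trail_at_A4 at1) k21).
Qed.

Lemma tauL_le_inner_large (P : pred D) : (forall d, P d -> ~~ isA4 d) ->
  tauL P <= #|[set e : D | inner e && isL e]|.
Proof.
move=> P_A4; rewrite /tauL -(card_in_imset (trail_end_inj P_A4)).
apply/subset_leq_card/subsetP => e /imsetP [d]; rewrite !inE.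
by move=> /and3P [_ inner_d trail_d] ->; apply: trail_end_inner_large.
Qed.

Lemma tauLU (P Q : pred D) :
  (forall d, P d -> ~~ Q d) -> tauL (predU P Q) = tauL P + tauL Q.
Proof.
move=> PQ; rewrite /tauL -cardsUI -[LHS]addn0 -(cards0 D).
congr (_ + _); apply: eq_card => d; rewrite !inE /=.
  exact: andb_orl.
by case Pd: (P d); rewrite //= (negbTE (PQ d Pd)) andbF.
Qed.

(* In a U6-cell the two vertices are consecutive, so exactly one of the four
   edge-segments joins two crossings. *)
Lemma count_inner_U6_le_fsize (c : D) :
  count inner (orbit phi c) + 5 * isU6 c <= fsize c.
Proof.
rewrite /fsize; case U6c: (isU6 c); last first.
  by rewrite addn0 (leq_trans (count_size _ _)) // size_orbit leq_addr.
move: U6c; rewrite /isU6 /fnv /flen => /and3P [/eqP len4 /eqP].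
have orbit4 : orbit phi c = [:: c; phi c; phi (phi c); phi (phi (phi c))].
  by rewrite /orbit len4.
have phi4 : phi (phi (phi (phi c))) = c.
  by have := iter_order phi_inj c; rewrite len4.
rewrite len4 orbit4 /= /inner -!isv_phi phi4.
by case: (v c) (v (phi c)) (v (phi (phi c))) (v (phi (phi (phi c))))
  => [] [] [] [].
Qed.

Lemma inner_large_U6_le_large_sum :
  #|[set e : D | inner e && isL e]| + 5 * N_U6 G <= large_sum G.
Proof.
pose large_face (c : D) := (c \in faces G) && isL c.
rewrite -sum1dep_card (partition_big (froot phi) large_face) /=; last first.
  move=> e /andP [_ large_e]; rewrite /large_face imset_f //=.
  by rewrite (isL_same_face (connect_root _ e)).
have -> : N_U6 G = \sum_(c | large_face c) isU6 c.
  rewrite /N_U6 -sum1dep_card -big_mkcondr /=; apply: eq_bigl => c.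
  rewrite /large_face -andbA; case U6c: (isU6 c); rewrite ?andbF ?andbT //.
  move: U6c => /and3P [/eqP len4 /eqP nv2 _].
  by rewrite /isL /fsize len4 nv2 andbT.
rewrite big_distrr -big_split /=; apply: leq_sum => c /andP [face_c _].
apply: leq_trans (count_inner_U6_le_fsize c); rewrite leq_add2r sum1dep_card.
rewrite -size_filter -(card_uniqP (filter_uniq _ (orbit_uniq _ _))).
apply/subset_leq_card/subsetP => e; rewrite !inE mem_filter -fconnect_orbit.
move=> /andP [/andP [-> _] /eqP <-] /=.
by rewrite (fconnect_sym phi_inj) connect_root.
Qed.

End Planarization.

Theorem mainTheorem4 (G : drawing) :
  three_saturated G ->
  tauL (@isB4 G) + tauL (@isB5 G) + tauL (@isA3 G) + tauL (@isA5 G)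
    + 5 * N_U6 G <= large_sum G.
Proof.
move=> [[alphaK [_ [sigma_inj [isv_sigma _]]]] _].
rewrite -!tauLU; [| move=> d /=; rewrite /isB4 /isB5 /isA3 /isA5;
  by case: (flen d) => [|[|[|[|[|[]]]]]]; case: (fnv d) => [|[]] ..].
apply: leq_trans (inner_large_U6_le_large_sum alphaK sigma_inj isv_sigma).
rewrite leq_add2r; apply: (tauL_le_inner_large alphaK sigma_inj isv_sigma).
move=> d /=; rewrite /isB4 /isB5 /isA3 /isA5 /isA4.
by case: (flen d) => [|[|[|[|[|[]]]]]]; case: (fnv d) => [|[]].
Qed.
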